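(* Assume the setting described in the context, and let $m=l+(k-1)d\in\{1,\dots,d(p+q)\}$ with $k\in\{1,\dots,p+q\}$ and $l\in\{1,\dots,d\}$. For every $z\in B(1,\delta_0)$ there exist $x_1^\pm(z),\dots,x_{p+q}^\pm(z)\in\mathbb C$ such that $$L_m^\pm(z)=\begin{pmatrix}x_1^\pm(z)\mathbf l_l^\pm\\ \vdots\\ x_{p+q}^\pm(z)\mathbf l_l^\pm\end{pmatrix},$$ and moreover $x_1^\pm(z)=\lambda_{l,q}^\pm\,(\zeta_m^\pm)'(z)$ for all $z\in B(1,\delta_0)$.
   Context: Let $d,p,q\ge1$. Let $\mathbf r_1^\pm,\dots,\mathbf r_d^\pm$ be a basis of $\mathbb C^d$ (eigenvectors of $df(u^\pm)$), $\mathbf P^\pm=(\mathbf r_1^\pm|\dots|\mathbf r_d^\pm)$ and $(\mathbf l_1^\pm|\dots|\mathbf l_d^\pm)^T=(\mathbf P^\pm)^{-1}$. Let $A_k^\pm\in\mathcal M_d(\mathbb C)$, $k=-p,\dots,q$, satisfy $(\mathbf P^\pm)^{-1}A_k^\pm\mathbf P^\pm=\mathrm{diag}(\lambda_{1,k}^\pm,\dots,\lambda_{d,k}^\pm)$, with $A^\pm_{-p},A^\pm_q$ invertible, and let $\mathcal F_l^\pm(\kappa)=\sum_{k=-p}^q\lambda_{l,k}^\pm\kappa^k$. Assume $\mathcal F_l^\pm(1)=1$ and that $\mathcal F_l^\pm(\kappa)=1$ has $p+q$ distinct nonzero roots for each $l$. Let $\delta_0>0$ be such that for each $l$ these roots extend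 to holomorphic functions $\zeta_{l+(k-1)d}^\pm$, $k=1,\dots,p+q$, on $B(1,\delta_0)$ with $\mathcal F_l^\pm(\zeta_{l+(k-1)d}^\pm(z))=z$ and the $\zeta^\pm_{l+(k-1)d}(z)$, $k=1,\dots,p+q$, pairwise distinct for each $z$. Define $R_m^\pm(z)=(\zeta_m^\pm(z)^{q-1}\mathbf r_l^\pm,\dots,\zeta_m^\pm(z)^{-p}\mathbf r_l^\pm)^T\in\mathbb C^{d(p+q)}$ for $m=l+(k-1)d$, $N^{\pm,\infty}(z)=(R_1^\pm(z)|\dots|R^\pm_{d(p+q)}(z))$ (invertible), and $L_1^\pm(z),\dots,L_{d(p+q)}^\pm(z)$ by $(L_1^\pm(z)|\dots|L_{d(p+q)}^\pm(z))^T=N^{\pm,\infty}(z)^{-1}$ (the dual basis). *)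

From HB Require Import structures.
From mathcomp Require Import all_boot all_order all_algebra.
From mathcomp Require Import complex.
From mathcomp Require Import all_classical all_reals all_analysis.
Set Implicit Arguments. Unset Strict Implicit. Unset Printing Implicit Defensive.
Import Order.TTheory GRing.Theory Num.Theory.
Import numFieldNormedType.Exports.
Local Open Scope ring_scope.

Definition Fsym (C : unitRingType) (d p q : nat) (lam : 'I_d -> int -> C)
    (l : 'I_d) (kappa : C) : C :=
  \sum_(i < (p + q).+1) lam l (i%:Z - p%:Z) * kappa ^ (i%:Z - p%:Z).

(* Inverse of mxvec_index: an index a of 'I_(m*n) (row-major order,
   a = i * n + j) is decomposed as the pair (i, j). *)
Definition unvec_index (m n : nat) (a : 'I_(m * n)) : 'I_m * 'I_n :=
  enum_val (cast_ord (esym (mxvec_cast m n)) a).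

(* R_m(z) for m = (k,l) (i.e. m = l + k d, 0-based):
   the stacked vector (zeta^(q-1) r_l, ..., zeta^(-p) r_l), block j having
   exponent q-1-j; r_l is the l-th column of P. *)
Definition Rvec (C : unitRingType) (d p q : nat) (P : 'M[C]_d) (l : 'I_d)
    (zeta : C) : 'rV[C]_((p + q) * d) :=
  mxvec (\matrix_(j < p + q, i < d) (zeta ^ (q%:Z - 1 - j%:Z) * P i l)).

(* N^infty(z) = (R_1(z) | ... | R_{d(p+q)}(z)), columns indexed by
   m = mxvec_index k l. *)
Definition Nmat (C : unitRingType) (d p q : nat) (P : 'M[C]_d)
    (zeta : 'I_(p + q) -> 'I_d -> C -> C) (z : C) : 'M[C]_((p + q) * d) :=
  \matrix_(a, b) Rvec p q P (unvec_index b).2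
                   (zeta (unvec_index b).1 (unvec_index b).2 z) 0 a.

(* Complex differentiability / complex derivative of f : C -> C, with C = R[i]
   viewed as a normed module over itself (increments h range over C). *)
Definition cderivable (R : realType) (f : R[i] -> R[i]) (z : R[i]) : Prop :=
  derivable (f : R[i]^o -> R[i]^o) z 1.
Definition cderive (R : realType) (f : R[i] -> R[i]) (z : R[i]) : R[i] :=
  derive1 (f : R[i]^o -> R[i]^o) z.

From HB Require Import structures.
From mathcomp Require Import all_boot all_order all_algebra.
From mathcomp Require Import complex.
From mathcomp Require Import all_classical all_reals all_analysis.
From mathcomp Require Import ring zify.
Set Implicit Arguments. Unset Strict Implicit. Unset Printing Implicit Defensive.
Import Order.TTheory GRing.Theory Num.Theory.
Import numFieldNormedType.Exports.
Local Open Scope ring_scope.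

(* For fixed z and l, the p + q distinct numbers zeta_k'(z) are the roots of
   H_z(X) = X^p (F_l(X) - z), a polynomial of degree at most p + q whose
   coefficient of X^(p+q) is lam_{l,q}.  Deflating the root a = zeta_k(z) leaves
   Q = H_z / (X - a), and X^-p Q(X) is a Laurent polynomial with exponents
   q - 1, ..., -p, with coefficients c_1, ..., c_(p+q) say.  Paired with the
   column R_(k',l') of N^infty(z), the row (c_1 l_l, ..., c_(p+q) l_l) gives
   (X^-p Q)(zeta_k'(z)) times l_l . r_l', which vanishes unless
   (k', l') = (k, l).  At a it equals a^-p H_z'(a) = F_l'(a), and
   differentiating F_l(zeta_k(w)) = w gives F_l'(a) zeta_k'(z) = 1.  Hence
   L_m = zeta_k'(z) (c_1 l_l, ..., c_(p+q) l_l), and c_1 = lam_{l,q} is the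
   leading coefficient of Q. *)

Lemma sum_exprz_shift (F : fieldType) (e : nat -> F) (n s : nat) (x : F) :
  x != 0 ->
  \sum_(i < n) e i * x ^+ i = x ^+ s * \sum_(i < n) e i * x ^ (i%:Z - s%:Z).
Proof.
move=> x0; rewrite mulr_sumr; apply: eq_bigr => i _.
by rewrite mulrCA -[x ^+ s]/(x ^ s%:Z) -exprzDr ?unitfE // addrC subrK.
Qed.

Section Deflation.
Variables (F : fieldType) (H : {poly F}) (a : F).
Hypothesis Ha : root H a.
Let Q := H %/ ('X - a%:P).

Lemma divp_XsubCK : Q * ('X - a%:P) = H.
Proof. by apply: divpK; rewrite dvdp_XsubCl. Qed.

Lemma size_divp_XsubC n : (size H <= n.+1)%N -> (size Q <= n)%N.
Proof.
by rewrite /Q size_divp ?polyXsubC_eq0 // size_XsubC leq_subLR.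
Qed.

Lemma coef_divp_XsubC_top n : (size H <= n.+2)%N -> Q`_n = H`_n.+1.
Proof.
move=> /size_divp_XsubC sQ.
rewrite -divp_XsubCK mulrBr coefB coefMX coefMC /= (nth_default 0 sQ).
by rewrite mul0r subr0.
Qed.

Lemma horner_divp_XsubC : Q.[a] = H^`().[a].
Proof.
by rewrite -divp_XsubCK derivM derivXsubC !hornerE subrr mulr0 add0r.
Qed.

Lemma root_divp_XsubC b : root H b -> b != a -> root Q b.
Proof.
by rewrite -{1}divp_XsubCK rootM root_XsubC => /orP[// | /eqP->]; rewrite eqxx.
Qed.

End Deflation.

Section SymbolPolynomial.
Variables (F : fieldType) (d p q : nat) (lam : 'I_d -> int -> F) (l : 'I_d).

Definition symbol_poly : {poly F} := \poly_(i < (p + q).+1) lam l (i%:Z - p%:Z).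

Lemma horner_symbol_poly x :
  x != 0 -> symbol_poly.[x] = x ^+ p * Fsym p q lam l x.
Proof.
move=> x0; rewrite horner_poly.
by rewrite (sum_exprz_shift (fun i => lam l (i%:Z - p%:Z)) _ p x0).
Qed.

Definition level_poly (z : F) : {poly F} := symbol_poly - z *: 'X^p.

Lemma root_level_poly z x :
  x != 0 -> Fsym p q lam l x = z -> root (level_poly z) x.
Proof.
by move=> x0 Fx; rewrite /root !hornerE horner_symbol_poly // Fx mulrC subrr.
Qed.

Lemma size_level_poly z : (size (level_poly z) <= (p + q).+1)%N.
Proof.
rewrite (leq_trans (size_polyD _ _)) // geq_max size_polyN size_poly /=.
by rewrite (leq_trans (size_scale_leq _ _)) // size_polyXn ltnS leq_addr.
Qed.

Lemma coef_level_poly_top z : (0 < q)%N -> (level_poly z)`_(p + q) = lam l q%:Z.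
Proof.
move=> q0; rewrite coefB coef_poly coefZ coefXn ltnSn.
have -> : (p + q == p)%N = false by apply/negbTE; lia.
by rewrite mulr0 subr0 PoszD addrC addKr.
Qed.

End SymbolPolynomial.

Definition laurent (C : unitRingType) (p q : nat) (c : nat -> C) (x : C) : C :=
  \sum_(j < p + q) c j * x ^ (q%:Z - 1 - j%:Z).

Lemma laurentZ (C : unitRingType) (p q : nat) (s : C) (c : nat -> C) (x : C) :
  laurent p q (fun j => s * c j) x = s * laurent p q c x.
Proof. by rewrite /laurent mulr_sumr; apply: eq_bigr => j _; rewrite mulrA. Qed.

Lemma horner_laurent_rev (F : fieldType) (p q : nat) (Q : {poly F}) (x : F) :
  (size Q <= p + q)%N -> x != 0 ->
  Q.[x] = x ^+ p * laurent p q (fun j => Q`_((p + q).-1 - j)) x.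
Proof.
move=> sQ x0.
rewrite (horner_coef_wide _ sQ) (sum_exprz_shift (fun i => Q`_i) _ p x0).
rewrite /laurent (reindex_inj rev_ord_inj) /=; congr (_ * _).
by apply: eq_bigr => j _; have jlt := ltn_ord j; congr (_`_ _ * x ^ _); lia.
Qed.

Lemma unvec_mxvec_index (m n : nat) (i : 'I_m) (j : 'I_n) :
  unvec_index (mxvec_index i j) = (i, j).
Proof. by rewrite /unvec_index /mxvec_index cast_ordK enum_rankK. Qed.

Lemma sum_mxvec_index (V : nmodType) (m n : nat) (G : 'I_(m * n) -> V) :
  \sum_a G a = \sum_i \sum_j G (mxvec_index i j).
Proof.
by rewrite pair_bigA (reindex _ (curry_mxvec_bij m n)); apply: eq_bigr => -[].
Qed.

Lemma eq_mxvec_index (m n : nat) (i i' : 'I_m) (j j' : 'I_n) :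
  (mxvec_index i j == mxvec_index i' j') = (i == i') && (j == j').
Proof.
apply/eqP/andP => [/(congr1 (@unvec_index m n))|[/eqP-> /eqP->] //].
by rewrite !unvec_mxvec_index => -[-> ->].
Qed.

Lemma row_invmx_mul_delta (C : comUnitRingType) (n : nat) (N : 'M[C]_n)
    (W : 'rV[C]_n) (m : 'I_n) :
  N \in unitmx -> W *m N = delta_mx 0 m -> row m (invmx N) = W.
Proof. by move=> Nu WN; rewrite rowE -WN mulmxK. Qed.

Section DualRows.
Variables (C : comUnitRingType) (d p q : nat) (P : 'M[C]_d).
Variables (zeta : 'I_(p + q) -> 'I_d -> C -> C) (z : C).
Hypothesis Pu : P \in unitmx.

Definition Lvec (l : 'I_d) (x : nat -> C) : 'rV[C]_((p + q) * d) :=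
  mxvec (\matrix_(j < p + q, i < d) (x j * invmx P l i)).

Lemma Lvec_mulNmatE l x k' l' :
  (Lvec l x *m Nmat P zeta z) 0 (mxvec_index k' l')
    = laurent p q x (zeta k' l' z) * (l == l')%:R.
Proof.
have -> : (l == l')%:R = (invmx P *m P) l l' by rewrite mulVmx // mxE.
rewrite mxE sum_mxvec_index /laurent mulr_suml; apply: eq_bigr => j _.
rewrite mxE mulr_sumr; apply: eq_bigr => i _.
rewrite /Nmat !mxE unvec_mxvec_index /Lvec /Rvec !mxvecE !mxE /=; ring.
Qed.

Lemma Lvec_mulNmat_delta k l x :
  (forall k', laurent p q x (zeta k' l z) = (k' == k)%:R) ->
  Lvec l x *m Nmat P zeta z = delta_mx 0 (mxvec_index k l).
Proof.
move=> xdual; apply/rowP => b; case/mxvec_indexP: b => k' l'.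
rewrite Lvec_mulNmatE !mxE eqxx /= eq_mxvec_index.
have [<-|ll] := eqVneq l l'; last by rewrite mulr0 andbF.
by rewrite xdual mulr1 andbT.
Qed.

End DualRows.

Section ScalarDerivatives.
Variable K : numFieldType.
Implicit Types (f g : K^o -> K^o) (x : K^o).

(* The library proves these two facts over a realFieldType only. *)
Lemma is_derive1_comp f g x (df dg : K) :
  is_derive x 1 f df -> is_derive (f x) 1 g dg ->
  is_derive x 1 (g \o f) (dg * df).
Proof.
move=> [/derivable1_diffP fx <-] [/derivable1_diffP gfx <-].
have gofx : differentiable (g \o f) x by exact: differentiable_comp.
apply: DeriveDef; first exact/derivable1_diffP.
rewrite -!derive1E !derive1E' // diff_comp // -[X in 'd _ _ X = _]mulr1.
by rewrite [LHS]linearZ mulrC.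
Qed.

Lemma is_derive1_horner (G : {poly K}) x :
  is_derive x 1 (horner G : K^o -> K^o) G^`().[x].
Proof.
elim/poly_ind: G => [|G c ih].
  have -> : horner (0 : {poly K}) = cst 0 by apply/funext => y; rewrite horner0.
  by rewrite deriv0 horner0; exact: is_derive_cst.
have -> : horner (G * 'X + c%:P) = (horner G * id) + cst c :> (K^o -> K^o).
  by apply/funext => y; rewrite !hornerE.
rewrite derivMXaddC; apply: is_derive_eq.
by rewrite !hornerE /= [_%:A]mulr1 mulrC.
Qed.

Lemma near_norm_subr_lt (c z : K^o) (r : K) :
  `|z - c| < r -> \forall w \near z, `|w - c| < r.
Proof.
move=> zr; have : open_nbhs z (ball c r).
  by split; [exact: ball_open | rewrite -ball_normE /= distrC].
by move/open_nbhs_nbhs; apply: filterS => w; rewrite -ball_normE /= distrC.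
Qed.

Lemma derive1_implicit_poly (G : {poly K}) f (n : nat) x :
  derivable f x 1 -> (\forall w \near x, G.[f w] = w * f w ^+ n) ->
  derive1 f x * (G - x *: 'X^n)^`().[f x] = f x ^+ n.
Proof.
move=> fx level; have Df : is_derive x 1 f (derive1 f x).
  by rewrite derive1E; exact: derivableP.
have D1 := is_deriveB (is_derive1_comp Df (is_derive1_horner G (f x)))
  (is_deriveM (is_derive_id x 1) (is_deriveX n Df)).
have D0 : is_derive x 1 (horner G \o f - id * f ^+ n : K^o -> K^o) 0.
  apply: near_eq_is_derive (is_derive_cst 0 _ _).
  by apply: filterS level => w; rewrite !fctE => ->; rewrite subrr.
have := etrans (esym (@derive_val _ _ _ _ _ _ _ D0))
  (@derive_val _ _ _ _ _ _ _ D1).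
move/eqP; rewrite eq_sym subr_eq0 => /eqP.
rewrite derivB derivZ derivXn !hornerE hornerMn hornerXn /=.
rewrite [_%:A]mulr1 exprfctE.
have scaleE (u v : K) : u *: (v : K^o) = u * v by [].
by rewrite !scaleE -mulr_natl mulrBr [X in X - _]mulrC => ->; ring.
Qed.

End ScalarDerivatives.

Lemma row_invmx_Nmat (F : fieldType) (d p q : nat) (P : 'M[F]_d)
    (lam : 'I_d -> int -> F) (zeta : 'I_(p + q) -> 'I_d -> F -> F) (z s : F)
    (k : 'I_(p + q)) (l : 'I_d) :
  (0 < q)%N -> P \in unitmx -> Nmat P zeta z \in unitmx ->
  (forall k', zeta k' l z != 0) ->
  (forall k', Fsym p q lam l (zeta k' l z) = z) ->
  injective (fun k' => zeta k' l z) ->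
  s * (level_poly p q lam l z)^`().[zeta k l z] = zeta k l z ^+ p ->
  exists2 x : nat -> F,
    row (mxvec_index k l) (invmx (Nmat P zeta z)) = Lvec p q P l x
    & x 0%N = lam l q%:Z * s.
Proof.
move=> q0 Pu Nu znz zF zinj.
set a := zeta k l z; set H := level_poly p q lam l z; set Q := H %/ ('X - a%:P).
move=> s_dual.
have rootH k' : root H (zeta k' l z) by exact: root_level_poly.
have pq : (p + q).-1.+1 = (p + q)%N by rewrite prednK // addn_gt0 q0 orbT.
have sH : (size H <= (p + q).-1.+2)%N by rewrite pq; exact: size_level_poly.
pose c j := Q`_((p + q).-1 - j).
have Q_laurent k' :
    Q.[zeta k' l z] = zeta k' l z ^+ p * laurent p q c (zeta k' l z).
  by apply: horner_laurent_rev (znz k'); exact/size_divp_XsubC/size_level_poly.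
have laurent_dual k' :
    laurent p q (fun j => s * c j) (zeta k' l z) = (k' == k)%:R.
  rewrite laurentZ; have [->|k'k] := eqVneq k' k.
    apply: (mulfI (expf_neq0 p (znz k))); rewrite mulrCA -Q_laurent.
    by rewrite horner_divp_XsubC ?s_dual ?mulr1 //; exact: rootH.
  have : root Q (zeta k' l z).
    apply: (root_divp_XsubC (rootH k) (rootH k')).
    exact: contra_neq (zinj k' k) k'k.
  rewrite /root Q_laurent mulf_eq0 expf_eq0 (negbTE (znz k')) andbF.
  by move=> /eqP->; rewrite mulr0.
exists (fun j => s * c j).
  by apply: row_invmx_mul_delta Nu _; exact: Lvec_mulNmat_delta.
rewrite /c subn0 mulrC (coef_divp_XsubC_top (rootH k) sH) pq.
by congr (_ * s); exact: coef_level_poly_top.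
Qed.

Theorem lemma4p2 (R : realType) (d p q : nat)
  (P : 'M[R[i]]_d) (A : int -> 'M[R[i]]_d) (lam : 'I_d -> int -> R[i])
  (delta0 : R) (zeta : 'I_(p + q) -> 'I_d -> R[i] -> R[i]) :
  (0 < d)%N -> (0 < p)%N -> (0 < q)%N ->
  (* columns r_1..r_d of P form a basis *)
  P \in unitmx ->
  (* P^{-1} A_k P = diag(lam_{1,k}, ..., lam_{d,k}) for k = -p..q *)
  (forall k : int, - p%:Z <= k <= q%:Z ->
     invmx P *m A k *m P = diag_mx (\row_l lam l k)) ->
  A (- p%:Z) \in unitmx -> A q%:Z \in unitmx ->
  (forall l, Fsym p q lam l 1 = 1) ->
  (* F_l(kappa) = 1 has p+q distinct nonzero roots *)
  (forall l, exists rts : 'I_(p + q) -> R[i],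
     injective rts /\ (forall k, rts k != 0) /\
     (forall k, Fsym p q lam l (rts k) = 1)) ->
  0 < delta0 ->
  (* the roots extend to holomorphic functions on B(1, delta0) *)
  (forall k l z, `|z - 1| < (delta0%:C)%C -> cderivable (zeta k l) z) ->
  (forall k l z, `|z - 1| < (delta0%:C)%C -> zeta k l z != 0) ->
  (forall k l z, `|z - 1| < (delta0%:C)%C -> Fsym p q lam l (zeta k l z) = z) ->
  (forall l z, `|z - 1| < (delta0%:C)%C ->
     injective (fun k => zeta k l z)) ->
  (* N^infty(z) is invertible (as asserted in the setting) *)
  (forall z, `|z - 1| < (delta0%:C)%C -> Nmat P zeta z \in unitmx) ->
  forall (k : 'I_(p + q)) (l : 'I_d) (z : R[i]), `|z - 1| < (delta0%:C)%C ->
  exists x : nat -> R[i],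
    row (mxvec_index k l) (invmx (Nmat P zeta z))
      = mxvec (\matrix_(j < p + q, i < d) (x j * invmx P l i))
    /\ x 0%N = lam l q%:Z * cderive (zeta k l) z.
Proof.
move=> _ _ q0 Pu _ _ _ _ _ _ zder znz zF zinj Nu k l z zin.
have level : \forall w \near (z : R[i]^o),
    (symbol_poly p q lam l).[zeta k l w] = w * zeta k l w ^+ p.
  apply: filterS (near_norm_subr_lt zin) => w win.
  by rewrite horner_symbol_poly ?znz // zF // mulrC.
have [x row_x x0] := row_invmx_Nmat q0 Pu (Nu z zin)
  (fun k' => znz k' l z zin) (fun k' => zF k' l z zin) (zinj l z zin)
  (derive1_implicit_poly (zder k l z zin) level).
by exists x.
Qed.
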